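(* Let $f:\widetilde{\mathbb C}\to\widetilde{\mathbb C}$ be a generalized holomorphic function which is generalized entire, and assume $f$ is bounded: there exists $M\in\widetilde{\mathbb R}_{>0}$ with $|f(z)|<M$ for all $z\in\widetilde{\mathbb C}$. Then $f$ is constant.
   Context: Fix $I=(0,1]$ and a gauge $\rho=(\rho_\varepsilon)_{\varepsilon\in I}$ with $\rho_\varepsilon\in I$ and $\rho_\varepsilon\to0$ as $\varepsilon\to0$. ''$\forall^0\varepsilon$'' means ''for all sufficiently small $\varepsilon\in I$''. A net $(x_\varepsilon)\in\mathbb C^I$ is $\rho$-moderate ($(x_\varepsilon)\in\mathbb C_\rho$) if $\exists N\in\mathbb N\,\forall^0\varepsilon:|x_\varepsilon|\le\rho_\varepsilon^{-N}$, and $\rho$-negligible if $\forall q\in\mathbb N\,\forall^0\varepsilon:|x_\varepsilon|\le\rho_\varepsilon^q$. $\widetilde{\mathbb C}:=\mathbb C_\rho/\{\text{negligible nets}\}$ with classes $[x_\varepsilon]$; $\widetilde{\mathbb R}\subseteq\widetilde{\mathbb C}$ consists of classes of real moderate nets; $\mathrm d\rho:=[\rho_\varepsilon]$, $|[z_\varepsilon]|:=[|z_\varepsilon|]$. On $\widetilde{\mathbb R}$: $[x_\varepsilon]\le[y_\varepsilon]$ iff $x_\varepsilon\le y_\varepsilon+z_\varepsilon$ $\forall^0\varepsilon$ for some negligible $(z_\varepsilon)$; $x<y$ iff $\exists m\,\forall^0\varepsilon:y_\varepsilon-x_\varepsilon>\rho_\varepsilon^m$; $\widetilde{\mathbb R}_{>0}:=\{x:x>0\}$.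 The sharp topology on $\widetilde{\mathbb C}$ is generated by $B_r(c):=\{z:|z-c|<r\}$, $r\in\widetilde{\mathbb R}_{>0}$. Hypernatural numbers: $\widetilde{\mathbb N}:=\{[n_\varepsilon]\in\widetilde{\mathbb R}:n_\varepsilon\in\mathbb N\ \forall\varepsilon\}$; for each $N\in\widetilde{\mathbb N}$ a representative $(\mathrm{ni}(N)_\varepsilon)$ with all $\mathrm{ni}(N)_\varepsilon\in\mathbb N$ is fixed. Hyperlimit: $l=\lim_{n\in\widetilde{\mathbb N}}a_n$ means $\forall q\,\exists M\in\widetilde{\mathbb N}\,\forall n\in\widetilde{\mathbb N}:n\ge M\Rightarrow|a_n-l|<\mathrm d\rho^q$. Hyperseries: a net $(a_{n\varepsilon})_{n\in\mathbb N,\varepsilon\in I}$ is moderate over hypersums if for every $N\in\widetilde{\mathbb N}$ the net $(\sum_{n=0}^{\mathrm{ni}(N)_\varepsilon}a_{n\varepsilon})_\varepsilon$ is $\rho$-moderate; two such nets are equivalent if for all $N,M\in\widetilde{\mathbb N}$ the net $(\sum_{n=\mathrm{ni}(N)_\varepsilon}^{\mathrm{ni}(M)_\varepsilon}(a_{n\varepsilon}-\bar a_{n\varepsilon}))_\varepsilon$ is negligible; the quotient is $\widetilde{\mathbb C}_{\mathrm s}$ with classes $[b_{n\varepsilon}]_{\mathrm s}$. $\sum_{n=N}^Mb_n:=[\sum_{n=\mathrm{ni}(N)_\varepsilon}^{\mathrm{ni}(M)_\varepsilon}b_{n\varepsilon}]$, and $\sum_{n\in\widetilde{\mathbb N}}b_n:=\lim_{N\in\widetilde{\mathbb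 N}}\sum_{n=0}^Nb_n$ when this exists. Coefficients: $\widetilde{\mathbb C}_{\mathrm c}$ is the set of weakly $\rho$-moderate nets $(a_{n\varepsilon})$ ($\exists Q,R\in\mathbb N\,\forall^0\varepsilon\,\forall n\in\mathbb N:|a_{n\varepsilon}|\le\rho_\varepsilon^{-nQ-R}$) modulo strong equivalence ($\forall q,r\,\forall^0\varepsilon\,\forall n:|a_{n\varepsilon}-\bar a_{n\varepsilon}|\le\rho_\varepsilon^{nq+r}$), classes $(a_n)_{\mathrm c}=[a_{n\varepsilon}]_{\mathrm c}$. $\widetilde{\mathbb R}_\infty:=(\mathbb R\cup\{\pm\infty\})^I/\sim_\rho$, and for $x\in\widetilde{\mathbb R}$, $y\in\widetilde{\mathbb R}_\infty$, $x<y$ iff $\exists m\,\forall^0\varepsilon:y_\varepsilon>x_\varepsilon+\rho_\varepsilon^m$. Radius: $\mathrm{rad}(a_n)_{\mathrm c}:=[(\limsup_n|a_{n\varepsilon}|^{1/n})^{-1}]\in\widetilde{\mathbb R}_\infty$. Set of convergence: $S((a_n)_{\mathrm c},c)$ is the set of $z\in\widetilde{\mathbb C}$ with $|z-c|<\mathrm{rad}(a_n)_{\mathrm c}$ for which there exist representatives $z=[z_\varepsilon]$, $c=[c_\varepsilon]$, $(a_n)_{\mathrm c}=[a_{n\varepsilon}]_{\mathrm c}$ such that: (a) the net $(a_{n\varepsilon}(z_\varepsilon-c_\varepsilon)^n)_{n,\varepsilon}$ is moderate over hypersums; (b) $\sum_{n\in\widetilde{\mathbb N}}a_n(z-c)^n$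 converges and equals $[\sum_{n=0}^{\infty}a_{n\varepsilon}(z_\varepsilon-c_\varepsilon)^n]$; (c) for every representative $z=[\hat z_\varepsilon]$, the net $(\sum_{n\ge1}na_{n\varepsilon}(\hat z_\varepsilon-c_\varepsilon)^{n-1})_\varepsilon$ is $\rho$-moderate. Generalized holomorphic functions: for $U\subseteq\widetilde{\mathbb C}$ sharply open, $f:U\to\widetilde{\mathbb C}$ is a GHF if there exist open sets $\Omega_\varepsilon\subseteq\mathbb C$ and holomorphic $f_\varepsilon:\Omega_\varepsilon\to\mathbb C$ such that for every $z\in U$ and every representative $z=[z_\varepsilon]$: $z_\varepsilon\in\Omega_\varepsilon$ $\forall^0\varepsilon$, $f(z)=[f_\varepsilon(z_\varepsilon)]$, and $(f_\varepsilon^{(k)}(z_\varepsilon))\in\mathbb C_\rho$ for all $k\in\mathbb N$; $f^{(k)}(z):=[f^{(k)}_\varepsilon(z_\varepsilon)]$. Generalized entire: $f:\widetilde{\mathbb C}\to\widetilde{\mathbb C}$ is generalized entire (at $c$) if there are $c\in\widetilde{\mathbb C}$ and $(a_n)_{\mathrm c}\in\widetilde{\mathbb C}_{\mathrm c}$ with $S((a_n)_{\mathrm c},c)=\widetilde{\mathbb C}$ and $f(z)=\sum_{n\in\widetilde{\mathbb N}}a_n(z-c)^n$ for all $z\in\widetilde{\mathbb C}$. *)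

(* Colombeau-type generalized numbers are encoded "setoid style":
   a generalized number is represented by a net  R -> C  (only the values
   at eps in (0,1] matter), and equality in C~ is the relation [gequiv]. *)
From Stdlib Require Import Reals List ClassicalEpsilon.
From Coquelicot Require Import Coquelicot.
Open Scope R_scope.

Definition net := R -> C.
Definition rnet := R -> R.

Definition is_gauge (rho : rnet) : Prop :=
  (forall e, 0 < e <= 1 -> 0 < rho e <= 1) /\
  (forall d, 0 < d -> exists e0, 0 < e0 /\ forall e, 0 < e <= e0 -> e <= 1 -> rho e < d).

Definition eventually0 (P : R -> Prop) : Prop :=
  exists e0, 0 < e0 <= 1 /\ forall e, 0 < e <= e0 -> P e.

Section Gen.
Variable rho : rnet.

Definition moderate (x : net) : Prop :=
  exists N : nat, eventually0 (fun e => Cmod (x e) <= / (rho e ^ N)).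

Definition rmoderate (x : rnet) : Prop :=
  exists N : nat, eventually0 (fun e => Rabs (x e) <= / (rho e ^ N)).

Definition negligible (x : net) : Prop :=
  forall q : nat, eventually0 (fun e => Cmod (x e) <= rho e ^ q).

Definition rnegligible (x : rnet) : Prop :=
  forall q : nat, eventually0 (fun e => Rabs (x e) <= rho e ^ q).

Definition gequiv (x y : net) : Prop := negligible (fun e => Cminus (x e) (y e)).

Definition rle (x y : rnet) : Prop :=
  exists z, rnegligible z /\ eventually0 (fun e => x e <= y e + z e).
Definition rlt (x y : rnet) : Prop :=
  exists m : nat, eventually0 (fun e => y e - x e > rho e ^ m).

Definition abs_lt (z : net) (r : rnet) : Prop := rlt (fun e => Cmod (z e)) r.

Definition hypernat (n : R -> nat) : Prop := rmoderate (fun e => INR (n e)).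

Definition hle (n m : R -> nat) : Prop :=
  rle (fun e => INR (n e)) (fun e => INR (m e)).

(* finite sums sum_{n=lo}^{hi} b n (empty if hi < lo) *)
Definition csum_range (lo hi : nat) (b : nat -> C) : C :=
  fold_right Cplus (RtoC 0) (map b (seq lo (S hi - lo))).

Fixpoint Cpow (z : C) (n : nat) : C :=
  match n with O => RtoC 1 | S k => Cmult z (Cpow z k) end.

Definition hypersum (b : nat -> net) (N : R -> nat) : net :=
  fun e => csum_range 0 (N e) (fun n => b n e).

Definition moderate_over_hypersums (b : nat -> net) : Prop :=
  forall N, hypernat N -> moderate (hypersum b N).

Definition hyperseries_is (b : nat -> net) (l : net) : Prop :=
  moderate l /\
  forall q : nat, exists M, hypernat M /\
    forall N, hypernat N -> hle M N ->
      abs_lt (fun e => Cminus (hypersum b N e) (l e)) (fun e => rho e ^ q).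

Definition Cseries (u : nat -> C) : C :=
  (Series (fun n => Re (u n)), Series (fun n => Im (u n))).

Definition weakly_moderate (a : nat -> net) : Prop :=
  exists Q R0 : nat, eventually0 (fun e =>
    forall n : nat, Cmod (a n e) <= / (rho e ^ (n * Q + R0))).

Definition strong_equiv (a b : nat -> net) : Prop :=
  forall q r : nat, eventually0 (fun e =>
    forall n : nat, Cmod (Cminus (a n e) (b n e)) <= rho e ^ (n * q + r)).

(* |a|^(1/n), with 0^(1/n) = 0 *)
Definition nroot (x : R) (n : nat) : R :=
  if Req_EM_T x 0 then 0 else Rpower x (/ INR n).

Definition Rbar_inv0 (l : Rbar) : Rbar :=
  match l with
  | Finite r => if Req_EM_T r 0 then p_infty else Finite (/ r)
  | p_infty => Finite 0
  | m_infty => p_infty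
  end.

Definition rad (a : nat -> net) : R -> Rbar :=
  fun e => Rbar_inv0 (LimSup_seq (fun n => nroot (Cmod (a n e)) n)).

Definition rlt_inf (x : rnet) (y : R -> Rbar) : Prop :=
  exists m : nat, eventually0 (fun e => Rbar_lt (Finite (x e + rho e ^ m)) (y e)).

(* conditions (a),(b),(c) in the definition of the set of convergence, with
   the value v of the hyperseries sum_{n in N~} a_n (z-c)^n *)
Definition conv_reps (a : nat -> net) (c z : net) (v : net) : Prop :=
  exists (z' c' : net) (a' : nat -> net),
    gequiv z' z /\ gequiv c' c /\ strong_equiv a' a /\
    moderate_over_hypersums (fun n e => Cmult (a' n e) (Cpow (Cminus (z' e) (c' e)) n)) /\
    hyperseries_is (fun n e => Cmult (a' n e) (Cpow (Cminus (z' e) (c' e)) n)) v /\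
    gequiv v (fun e => Cseries (fun n => Cmult (a' n e) (Cpow (Cminus (z' e) (c' e)) n))) /\
    (forall zh : net, gequiv zh z ->
       moderate (fun e => Cseries (fun n =>
         Cmult (RtoC (INR (S n))) (Cmult (a' (S n) e) (Cpow (Cminus (zh e) (c' e)) n))))).

Definition in_conv_set (a : nat -> net) (c z : net) : Prop :=
  moderate z /\
  rlt_inf (fun e => Cmod (Cminus (z e) (c e))) (rad a) /\
  exists v, conv_reps a c z v.

(* f : C~ -> C~ represented by F on nets: well defined on classes *)
Definition gfun (F : net -> net) : Prop :=
  (forall z, moderate z -> moderate (F z)) /\
  (forall z w, moderate z -> gequiv z w -> gequiv (F z) (F w)).

(* complex derivative (chosen when it exists) and iterated derivatives *)
Definition Cder (g : C -> C) (z : C) : C :=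
  epsilon (inhabits (RtoC 0))
    (fun l => @is_derive C_AbsRing C_NormedModule g z l).

Fixpoint Cder_n (k : nat) (g : C -> C) : C -> C :=
  match k with O => g | S j => Cder (Cder_n j g) end.

Definition holomorphic_on (Om : C -> Prop) (g : C -> C) : Prop :=
  forall z, Om z -> exists l, @is_derive C_AbsRing C_NormedModule g z l.

Definition GHF (F : net -> net) : Prop :=
  exists (Om : R -> C -> Prop) (f : R -> C -> C),
    (forall e, @open C_UniformSpace (Om e)) /\
    (forall e, holomorphic_on (Om e) (f e)) /\
    forall z, moderate z ->
      eventually0 (fun e => Om e (z e)) /\
      gequiv (F z) (fun e => f e (z e)) /\
      (forall k : nat, moderate (fun e => Cder_n k (f e) (z e))).

Definition gen_entire (F : net -> net) : Prop :=
  exists (c : net) (a : nat -> net),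
    moderate c /\ weakly_moderate a /\
    (forall z, moderate z -> in_conv_set a c z) /\
    (forall z, moderate z -> conv_reps a c z (F z)).

End Gen.

(* Liouville's theorem through Cauchy's estimates.  As the set of convergence is all of C~, the
   radius of convergence of the coefficients [a_n] exceeds every [rho^-N].  For a net [w] with
   [|w| <= rho^-N], condition (b) writes [f (c + w)] as the power series at a representative of
   [w], and condition (c) makes the derivative series moderate there.  A bound that holds
   eventually along every net holds eventually uniformly (saturation), so Cauchy's estimate
   bounds the derivative series on the whole circle of radius [rho^-N]; the power series is
   therefore Lipschitz there, and [|f| < M <= rho^-P] bounds it by [rho^-(P+1)] on the circle.
   Cauchy's estimate again gives [|a_n| <= rho^(Nn - P - 1)] for all [N], so [f z - a_0] is
   negligible for every [z]. *)

From Pilot Require Import Defs.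
From Stdlib Require Import Reals Lra Lia FunctionalExtensionality ClassicalEpsilon Classical.
From Coquelicot Require Import Coquelicot.
Open Scope R_scope.

Lemma pow_le_1 (r : R) (n : nat) : 0 <= r <= 1 -> r ^ n <= 1.
Proof. intros Hr. rewrite <- (pow1 n). apply pow_incr; lra. Qed.

Lemma INR_S_le_pow2 (n : nat) : INR (S n) <= 2 ^ n.
Proof.
  induction n; [simpl; lra|]. rewrite S_INR. pose proof (pow_R1_Rle 2 n ltac:(lra)).
  simpl pow. lra.
Qed.

Lemma pow_inv_pow_cancel (r : R) (n N d k : nat) : 0 < r ->
  r ^ (n * (N + d) + k) * (/ r ^ N) ^ n = r ^ k * (r ^ d) ^ n.
Proof.
  intros Hr. rewrite pow_add, Nat.mul_add_distr_l, pow_add, (Nat.mul_comm n N),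
    (Nat.mul_comm n d), !pow_mult, pow_inv.
  assert (0 < (r ^ N) ^ n) by (apply pow_lt, pow_lt; auto). field. lra.
Qed.

Lemma inv_pow_ge_1 (r : R) (N : nat) : 0 < r <= 1 -> 1 <= / r ^ N.
Proof.
  intros Hr. rewrite <- Rinv_1. apply Rinv_le_contravar; [apply pow_lt; lra|].
  apply pow_le_1; lra.
Qed.

Lemma inv_pow_le_mono (r : R) (N M : nat) : 0 < r <= 1 -> (N <= M)%nat -> / r ^ N <= / r ^ M.
Proof.
  intros Hr HNM. rewrite <- !pow_inv. apply Rle_pow; auto.
  rewrite <- Rinv_1. apply Rinv_le_contravar; lra.
Qed.

Lemma inv_pow_S_ge_double (r : R) (K : nat) : 0 < r <= 1/2 -> 2 * / r ^ K <= / r ^ S K.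
Proof.
  intros Hr. simpl pow. rewrite Rinv_mult. pose proof (inv_pow_ge_1 r K ltac:(lra)).
  assert (2 <= / r) by (replace 2 with (/ (1/2)) by field; apply Rinv_le_contravar; lra).
  nra.
Qed.

Lemma inv_pow_add_le (r : R) (A B : nat) : 0 < r <= 1/2 ->
  / r ^ A + / r ^ B <= / r ^ S (Nat.max A B).
Proof.
  intros Hr. pose proof (inv_pow_S_ge_double r (Nat.max A B) Hr).
  pose proof (inv_pow_le_mono r A (Nat.max A B) ltac:(lra) ltac:(lia)).
  pose proof (inv_pow_le_mono r B (Nat.max A B) ltac:(lra) ltac:(lia)). lra.
Qed.

Lemma pow_S_add_small (r : R) (q : nat) : 0 < r < 1/16 -> r ^ S q + 4 * r ^ (q + 2) <= r ^ q.
Proof.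
  intros Hr. rewrite pow_add. simpl pow.
  pose proof (pow_le r q ltac:(lra)).
  assert (r * (r * 1) <= 1/16) by nra.
  assert (r ^ q * (r * (r * 1)) <= r ^ q * (1/16)) by (apply Rmult_le_compat_l; lra).
  nra.
Qed.

(* [R]-valued instances of Coquelicot's normed-module lemmas, which [apply] does not infer. *)
Lemma ex_series_Rmult_l (c : R) (a : nat -> R) : ex_series a -> ex_series (fun n => c * a n).
Proof. exact (ex_series_scal_l c a). Qed.

Lemma ex_series_Rle (a b : nat -> R) :
  (forall n, Rabs (a n) <= b n) -> ex_series b -> ex_series a.
Proof. exact (ex_series_le a b). Qed.

Lemma Series_const_0 : Series (fun _ => 0) = 0.
Proof.
  rewrite (Series_ext _ (fun _ => 0 * 0)) by (intros; ring).
  now rewrite Series_scal_l, Rmult_0_l.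
Qed.

Lemma ex_series_half_pow : ex_series (fun n => (1/2) ^ n).
Proof. apply ex_series_geom. rewrite Rabs_pos_eq; lra. Qed.

Lemma Series_half_pow : Series (fun n => (1/2) ^ n) = 2.
Proof.
  apply is_series_unique.
  assert (H := is_series_geom (1/2) ltac:(rewrite Rabs_pos_eq; lra)).
  replace (/ (1 - 1/2)) with 2 in H by field. exact H.
Qed.

Lemma Series_tail_le (x : nat -> R) (eps : R) : ex_series x -> 0 < eps ->
  exists N0, forall N, (N0 <= N)%nat -> Series (fun k => x (N + k)%nat) <= eps.
Proof.
  intros Hx Heps. pose proof (Series_correct _ Hx) as Hs.
  apply is_series_Reals in Hs. destruct (Hs eps Heps) as [N0 HN].
  exists (S N0). intros N HN0.
  pose proof (Series_incr_n x N ltac:(lia) Hx) as E.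
  specialize (HN (pred N) ltac:(lia)). unfold Rdist in HN.
  pose proof (Rabs_def2 _ _ HN). lra.
Qed.

Lemma ex_series_weighted_geom (q : R) : 0 < q < 1 -> ex_series (fun n => INR (S n) * q ^ n).
Proof.
  intros Hq. apply ex_series_Rabs, (ex_series_DAlembert _ q); [lra| |].
  - intros n. pose proof (lt_0_INR (S n) ltac:(lia)). pose proof (pow_lt q n ltac:(lra)). nra.
  - apply is_lim_seq_ext with (fun n => (1 + / INR (S n)) * q).
    + intros n. rewrite Rabs_pos_eq.
      * rewrite (S_INR (S n)). simpl pow. field.
        split; [apply pow_nonzero; lra|apply not_0_INR; lia].
      * apply Rdiv_le_0_compat.
        -- apply Rmult_le_pos; [apply pos_INR|apply pow_le; lra].
        -- apply Rmult_lt_0_compat; [apply lt_0_INR; lia|apply pow_lt; lra].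
    + replace (Finite q) with (Finite ((1 + 0) * q)) by (f_equal; ring).
      apply is_lim_seq_mult'; [|apply is_lim_seq_const].
      apply is_lim_seq_plus'; [apply is_lim_seq_const|].
      exact (is_lim_seq_inv _ _ (proj1 (is_lim_seq_incr_1 INR p_infty) is_lim_seq_INR)
               ltac:(discriminate)).
Qed.

(** * Absolutely convergent complex series *)

Definition abs_summable (u : nat -> C) : Prop := ex_series (fun n => Cmod (u n)).

Lemma Cmod_Im_le (c : C) : Rabs (Im c) <= Cmod c.
Proof.
  destruct c as [x y]; unfold Cmod, Im; simpl.
  rewrite <- sqrt_Rsqr_abs. apply sqrt_le_1_alt. unfold Rsqr. nra.
Qed.

Lemma Cmod_le_Re_Im (c : C) : Cmod c <= Rabs (Re c) + Rabs (Im c).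
Proof.
  destruct c as [x y]; unfold Cmod, Re, Im; simpl.
  rewrite <- (sqrt_Rsqr (Rabs x + Rabs y)) by (pose proof (Rabs_pos x); pose proof (Rabs_pos y); lra).
  apply sqrt_le_1_alt. unfold Rsqr.
  assert (Rabs x * Rabs x = x * x) by (rewrite <- Rabs_mult; apply Rabs_pos_eq; nra).
  assert (Rabs y * Rabs y = y * y) by (rewrite <- Rabs_mult; apply Rabs_pos_eq; nra).
  pose proof (Rabs_pos x); pose proof (Rabs_pos y). nra.
Qed.

Lemma abs_summable_le (u : nat -> C) (b : nat -> R) :
  (forall n, Cmod (u n) <= b n) -> ex_series b -> abs_summable u.
Proof.
  intros Hb. apply ex_series_Rle. intros n.
  rewrite Rabs_pos_eq by apply Cmod_ge_0. apply Hb.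
Qed.

Lemma abs_summable_Re (u : nat -> C) : abs_summable u -> ex_series (fun n => Rabs (Re (u n))).
Proof.
  apply ex_series_Rle. intros n. rewrite Rabs_Rabsolu. apply re_le_Cmod.
Qed.

Lemma abs_summable_Im (u : nat -> C) : abs_summable u -> ex_series (fun n => Rabs (Im (u n))).
Proof.
  apply ex_series_Rle. intros n. rewrite Rabs_Rabsolu. apply Cmod_Im_le.
Qed.

Lemma abs_summable_scal (k : C) (u : nat -> C) :
  abs_summable u -> abs_summable (fun n => (k * u n)%C).
Proof.
  intros Hu. apply (abs_summable_le _ (fun n => Cmod k * Cmod (u n))).
  - intros n; rewrite Cmod_mult; lra.
  - exact (ex_series_Rmult_l (Cmod k) _ Hu).
Qed.

Lemma abs_summable_minus (u v : nat -> C) :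
  abs_summable u -> abs_summable v -> abs_summable (fun n => (u n - v n)%C).
Proof.
  intros Hu Hv. apply (abs_summable_le _ (fun n => Cmod (u n) + Cmod (v n))).
  - intros n. unfold Cminus. rewrite <- (Cmod_opp (v n)). apply Cmod_triangle.
  - exact (ex_series_plus _ _ Hu Hv).
Qed.

Lemma abs_summable_shift (u : nat -> C) (N : nat) :
  abs_summable u -> abs_summable (fun k => u (N + k)%nat).
Proof. apply (ex_series_incr_n (fun n => Cmod (u n))). Qed.

Lemma abs_summable_geom (u : nat -> C) (K : R) :
  (forall n, Cmod (u n) <= K * (1/2) ^ n) -> abs_summable u.
Proof. intros H. apply (abs_summable_le _ _ H), ex_series_Rmult_l, ex_series_half_pow. Qed.

Lemma Cseries_ext (u v : nat -> C) : (forall n, u n = v n) -> Cseries u = Cseries v.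
Proof. intros H. unfold Cseries. f_equal; apply Series_ext; intros n; rewrite H; reflexivity. Qed.

Lemma Cseries_0 : Cseries (fun _ => RtoC 0) = RtoC 0.
Proof. unfold Cseries; simpl. now rewrite Series_const_0. Qed.

Lemma Cseries_plus (u v : nat -> C) : abs_summable u -> abs_summable v ->
  Cseries (fun n => (u n + v n)%C) = (Cseries u + Cseries v)%C.
Proof.
  intros Hu Hv. unfold Cseries, Cplus; simpl. f_equal; apply Series_plus;
    apply ex_series_Rabs; auto using abs_summable_Re, abs_summable_Im.
Qed.

Lemma Cseries_scal (k : C) (u : nat -> C) : abs_summable u ->
  Cseries (fun n => (k * u n)%C) = (k * Cseries u)%C.
Proof.
  intros Hu.
  pose proof (ex_series_Rabs _ (abs_summable_Re _ Hu)) as HRe.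
  pose proof (ex_series_Rabs _ (abs_summable_Im _ Hu)) as HIm.
  destruct k as [k1 k2]. unfold Cseries, Cmult, Re, Im in *; simpl.
  f_equal.
  - rewrite <- !Series_scal_l, <- Series_minus.
    + apply Series_ext; intros; reflexivity.
    + exact (ex_series_Rmult_l k1 _ HRe).
    + exact (ex_series_Rmult_l k2 _ HIm).
  - rewrite <- !Series_scal_l, <- Series_plus.
    + apply Series_ext; intros; reflexivity.
    + exact (ex_series_Rmult_l k1 _ HIm).
    + exact (ex_series_Rmult_l k2 _ HRe).
Qed.

Lemma Cseries_minus (u v : nat -> C) : abs_summable u -> abs_summable v ->
  Cseries (fun n => (u n - v n)%C) = (Cseries u - Cseries v)%C.
Proof.
  intros Hu Hv.
  rewrite (Cseries_ext _ (fun n => (u n + (-1) * v n)%C)) by (intros; ring).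
  rewrite Cseries_plus, Cseries_scal by auto using abs_summable_scal. ring.
Qed.

Lemma Cseries_incr_1 (u : nat -> C) : abs_summable u ->
  Cseries u = (u 0%nat + Cseries (fun n => u (S n)))%C.
Proof.
  intros Hu. unfold Cseries, Cplus; simpl. f_equal; apply Series_incr_1;
    apply ex_series_Rabs; auto using abs_summable_Re, abs_summable_Im.
Qed.

Lemma Cmod_Cseries_le (u : nat -> C) (b : nat -> R) :
  (forall n, Cmod (u n) <= b n) -> ex_series b -> Cmod (Cseries u) <= 2 * Series b.
Proof.
  intros Hb Hex. pose proof (abs_summable_le u b Hb Hex) as Hu.
  assert (Hmono : forall f : C -> R, (forall c, 0 <= f c <= Cmod c) ->
            Series (fun n => f (u n)) <= Series b).
  { intros f Hf. apply Series_le; auto. intros n. split; [apply Hf|].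
    eapply Rle_trans; [apply Hf|apply Hb]. }
  pose proof (Series_Rabs _ (abs_summable_Re _ Hu)).
  pose proof (Series_Rabs _ (abs_summable_Im _ Hu)).
  pose proof (Hmono (fun c => Rabs (Re c)) (fun c => conj (Rabs_pos _) (re_le_Cmod c))).
  pose proof (Hmono (fun c => Rabs (Im c)) (fun c => conj (Rabs_pos _) (Cmod_Im_le c))).
  eapply Rle_trans; [apply Cmod_le_Re_Im|]. unfold Cseries, Re, Im in *; simpl in *. lra.
Qed.

Lemma Cmod_Cseries_geom (u : nat -> C) (K : R) :
  (forall n, Cmod (u n) <= K * (1/2) ^ n) -> Cmod (Cseries u) <= 4 * K.
Proof.
  intros H. eapply Rle_trans.
  - apply (Cmod_Cseries_le u (fun n => K * (1/2) ^ n)); auto.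
    apply ex_series_Rmult_l, ex_series_half_pow.
  - rewrite Series_scal_l.
    change (Series (pow (1/2))) with (Series (fun n => (1/2) ^ n)).
    rewrite Series_half_pow. lra.
Qed.

Fixpoint Csum (K : nat) (f : nat -> C) : C :=
  match K with O => RtoC 0 | S k => (Csum k f + f k)%C end.

Lemma Csum_ext (K : nat) (f g : nat -> C) : (forall j, f j = g j) -> Csum K f = Csum K g.
Proof. intros H; induction K; simpl; congruence. Qed.

Lemma Cmod_Csum_le (K : nat) (f : nat -> C) (b : R) :
  (forall j, Cmod (f j) <= b) -> Cmod (Csum K f) <= INR K * b.
Proof.
  intros H. induction K; simpl Csum.
  - rewrite Cmod_0; simpl; lra.
  - eapply Rle_trans; [apply Cmod_triangle|]. rewrite S_INR. specialize (H K). lra.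
Qed.

Lemma Csum_scal (K : nat) (k : C) (f : nat -> C) :
  Csum K (fun j => (k * f j)%C) = (k * Csum K f)%C.
Proof. induction K; simpl; [|rewrite IHK]; ring. Qed.

Lemma Csum_const (K : nat) (k : C) : Csum K (fun _ => k) = (INR K * k)%C.
Proof. induction K; simpl Csum; [|rewrite IHK, S_INR, RtoC_plus]; simpl; ring. Qed.

Lemma Csum_0 (N : nat) (f : nat -> C) :
  (forall k, (k < N)%nat -> f k = RtoC 0) -> Csum N f = RtoC 0.
Proof.
  intros Hf. induction N as [|N IH]; simpl; [reflexivity|].
  rewrite IH, Hf by auto. ring.
Qed.

Lemma Csum_single (N n : nat) (f : nat -> C) : (n < N)%nat ->
  (forall k, (k < N)%nat -> k <> n -> f k = RtoC 0) -> Csum N f = f n.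
Proof.
  intros HnN Hf. induction N as [|N IH]; [lia|]. simpl Csum.
  destruct (Nat.eq_dec n N) as [->|Hne].
  - rewrite Csum_0 by (intros k Hk; apply Hf; lia). ring.
  - rewrite IH, (Hf N) by (auto; lia). ring.
Qed.

Lemma Cseries_incr_n (u : nat -> C) (N : nat) : abs_summable u ->
  Cseries u = (Csum N u + Cseries (fun k => u (N + k)%nat))%C.
Proof.
  intros Hu. induction N as [|N IH]; simpl Csum.
  - rewrite Cplus_0_l. apply Cseries_ext; reflexivity.
  - rewrite IH, (Cseries_incr_1 (fun k => u (N + k)%nat)) by (apply abs_summable_shift; auto).
    rewrite Nat.add_0_r, (Cseries_ext _ (fun k => u (S N + k)%nat))
      by (intros k; f_equal; lia).
    ring.
Qed.

Lemma Csum_Cseries (K : nat) (u : nat -> nat -> C) (b : nat -> R) :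
  (forall j m, Cmod (u j m) <= b m) -> ex_series b ->
  Csum K (fun j => Cseries (u j)) = Cseries (fun m => Csum K (fun j => u j m)).
Proof.
  intros Hb Hex. induction K as [|K IH]; simpl.
  - symmetry; apply Cseries_0.
  - rewrite IH, <- Cseries_plus; [reflexivity| |apply (abs_summable_le _ b); auto].
    apply (abs_summable_le _ (fun m => INR K * b m)).
    + intros m; apply Cmod_Csum_le; auto.
    + apply ex_series_Rmult_l; auto.
Qed.

Lemma Csum_geom (q : C) (K : nat) :
  ((q - 1) * Csum K (fun j => q ^ j))%C = (q ^ K - 1)%C.
Proof. induction K; simpl; [|rewrite Cmult_plus_distr_l, IHK]; ring. Qed.

Lemma Csum_geom_eq_0 (q : C) (K : nat) : q <> RtoC 1 -> (q ^ K)%C = RtoC 1 ->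
  Csum K (fun j => q ^ j)%C = RtoC 0.
Proof.
  intros Hq HqK. assert (Hq1 : (q - 1)%C <> RtoC 0).
  { intros E; apply Hq. replace q with ((q - 1) + 1)%C by ring. rewrite E; ring. }
  pose proof (Csum_geom q K) as G. rewrite HqK in G.
  replace (Csum K (fun j => q ^ j)%C) with (/ (q - 1) * ((q - 1) * Csum K (fun j => q ^ j)))%C
    by (field; auto).
  rewrite G. ring.
Qed.

(** * Power series *)

Definition power_series (b : nat -> C) (x : C) : C := Cseries (fun n => (b n * x ^ n)%C).

Definition deriv_coefs (b : nat -> C) (n : nat) : C := (INR (S n) * b (S n))%C.

Lemma abs_summable_power_series (b : nat -> C) (x : C) (s : R) : Cmod x <= s ->
  ex_series (fun n => Cmod (b n) * s ^ n) -> abs_summable (fun n => (b n * x ^ n)%C).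
Proof.
  intros Hx Hs. apply (abs_summable_le _ (fun n => Cmod (b n) * s ^ n)); auto.
  intros n. rewrite Cmod_mult, Cmod_pow. apply Rmult_le_compat_l; [apply Cmod_ge_0|].
  apply pow_incr; split; [apply Cmod_ge_0|auto].
Qed.

Lemma nroot_nonneg (x : R) (n : nat) : 0 <= nroot x n.
Proof. unfold nroot. destruct (Req_EM_T x 0); [lra|]. unfold Rpower; apply Rlt_le, exp_pos. Qed.

Lemma le_pow_of_nroot_lt (x c : R) (n : nat) : (1 <= n)%nat -> 0 <= x -> 0 < c ->
  nroot x n < c -> x <= c ^ n.
Proof.
  intros Hn Hx Hc H. unfold nroot in H. destruct (Req_EM_T x 0) as [->|E].
  - apply pow_le; lra.
  - assert (Hy : 0 < Rpower x (/ INR n)) by (unfold Rpower; apply exp_pos).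
    replace x with (Rpower (Rpower x (/ INR n)) (INR n)).
    + rewrite Rpower_pow by auto. apply pow_incr; lra.
    + rewrite Rpower_mult, Rinv_l, Rpower_1 by (lra || (apply not_0_INR; lia)). reflexivity.
Qed.

Lemma LimSup_lt_eventually (u : nat -> R) (t c : R) : 0 < t -> (forall n, 0 <= u n) ->
  Rbar_lt t (Rbar_inv0 (LimSup_seq u)) -> / t < c -> exists N, forall n, (N <= n)%nat -> u n < c.
Proof.
  intros Ht Hu H Hc.
  assert (HL : is_LimSup_seq u (LimSup_seq u))
    by (unfold LimSup_seq; destruct (ex_LimSup_seq u); auto).
  assert (Hc0 : 0 < c) by (pose proof (Rinv_0_lt_compat t Ht); lra).
  destruct (LimSup_seq u) as [l| |]; simpl in H.
  - assert (Hl : l < c).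
    { destruct (Req_EM_T l 0) as [->|E]; [lra|]. simpl in H.
      assert (Hl : 0 < l).
      { destruct (Rtotal_order l 0) as [Hl|[Hl|Hl]]; [|lra|lra].
        pose proof (Rinv_lt_0_compat l Hl). lra. }
      apply Rinv_lt_contravar in H; [|nra]. rewrite Rinv_inv in H. lra. }
    destruct (HL (mkposreal (c - l) ltac:(lra))) as [_ [N HN]]. exists N.
    intros n Hn. specialize (HN n Hn). simpl in HN. lra.
  - lra.
  - destruct (HL c) as [N HN]. exists N. auto.
Qed.

Lemma ex_series_root_test (A : nat -> C) (t s : R) : 0 <= s < t ->
  Rbar_lt t (Rbar_inv0 (LimSup_seq (fun n => nroot (Cmod (A n)) n))) ->
  ex_series (fun n => INR (S n) * Cmod (A n) * s ^ n).
Proof.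
  intros Hs H. set (t' := (s + t) / 2).
  assert (Ht' : s < t' < t) by (unfold t'; lra).
  destruct (LimSup_lt_eventually _ t (/ t') ltac:(lra) (fun n => nroot_nonneg _ _) H)
    as [N HN].
  { apply Rinv_lt_contravar; [apply Rmult_lt_0_compat|]; lra. }
  set (q := s / t').
  assert (Hq : 0 <= q < 1).
  { unfold q. split; [apply Rdiv_le_0_compat; lra|].
    apply (Rmult_lt_reg_r t'); [lra|]. unfold Rdiv; rewrite Rmult_assoc, Rinv_l; lra. }
  apply (ex_series_incr_n _ (S N)).
  apply (ex_series_Rle _ (fun k => INR (S (S N + k)) * ((1 + q) / 2) ^ (S N + k))).
  - intros k. set (n := (S N + k)%nat).
    pose proof (Cmod_ge_0 (A n)). pose proof (pos_INR (S n)).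
    rewrite Rabs_pos_eq by (apply Rmult_le_pos; [nra|apply pow_le; lra]).
    rewrite Rmult_assoc. apply Rmult_le_compat_l; [lra|].
    assert (HA : Cmod (A n) <= (/ t') ^ n).
    { apply le_pow_of_nroot_lt; [unfold n; lia|lra|apply Rinv_0_lt_compat; lra|].
      apply HN; unfold n; lia. }
    apply Rle_trans with ((/ t') ^ n * s ^ n).
    + apply Rmult_le_compat_r; [apply pow_le|]; lra.
    + rewrite <- Rpow_mult_distr. apply pow_incr. split.
      * apply Rmult_le_pos; [apply Rlt_le, Rinv_0_lt_compat|]; lra.
      * replace (/ t' * s) with q by (unfold q, Rdiv; ring). lra.
  - apply (ex_series_incr_n (fun n => INR (S n) * ((1 + q) / 2) ^ n) (S N)).
    apply ex_series_weighted_geom. lra.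
Qed.

Lemma ex_series_coefs_within_radius (b : nat -> C) (t s : R) : 1 <= s < t ->
  Rbar_lt t (Rbar_inv0 (LimSup_seq (fun n => nroot (Cmod (b n)) n))) ->
  ex_series (fun n => Cmod (b n) * s ^ n) /\ ex_series (fun n => Cmod (deriv_coefs b n) * s ^ n).
Proof.
  intros Hs Hr. pose proof (ex_series_root_test b t s ltac:(lra) Hr) as Hw.
  assert (Hpos : forall n, 0 <= Cmod (b n) * s ^ n)
    by (intros; apply Rmult_le_pos; [apply Cmod_ge_0|apply pow_le; lra]).
  split.
  - apply (ex_series_Rle _ (fun n => INR (S n) * Cmod (b n) * s ^ n)); [|exact Hw].
    intros n. rewrite Rabs_pos_eq by auto.
    assert (1 <= INR (S n)) by (rewrite S_INR; pose proof (pos_INR n); lra).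
    specialize (Hpos n). nra.
  - apply (ex_series_Rle _ (fun n => INR (S (S n)) * Cmod (b (S n)) * s ^ (S n))).
    + intros n. unfold deriv_coefs.
      rewrite Cmod_mult, Cmod_R, (Rabs_pos_eq (INR (S n))) by apply pos_INR.
      pose proof (Cmod_ge_0 (b (S n))). pose proof (pow_le s n ltac:(lra)).
      pose proof (pos_INR (S n)).
      rewrite Rabs_pos_eq by (apply Rmult_le_pos; [apply Rmult_le_pos|]; lra).
      assert (INR (S n) <= INR (S (S n))) by (apply le_INR; lia).
      assert (s ^ n <= s ^ S n) by (simpl; nra).
      apply Rmult_le_compat; try apply Rmult_le_compat; try apply Rmult_le_pos; lra.
    + exact (proj1 (ex_series_incr_1 (fun n => INR (S n) * Cmod (b n) * s ^ n)) Hw).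
Qed.

Lemma Cmod_pow_S_diff (x y : C) (s : R) (n : nat) : Cmod x <= s -> Cmod y <= s ->
  Cmod (x ^ S n - y ^ S n)%C <= INR (S n) * s ^ n * Cmod (x - y)%C.
Proof.
  intros Hx Hy. assert (Hs : 0 <= s) by (pose proof (Cmod_ge_0 x); lra).
  induction n.
  - simpl. replace (x * 1 - y * 1)%C with (x - y)%C by ring. lra.
  - replace (x ^ S (S n) - y ^ S (S n))%C
      with (x * (x ^ S n - y ^ S n) + y ^ S n * (x - y))%C by (simpl; ring).
    eapply Rle_trans; [apply Cmod_triangle|]. rewrite !Cmod_mult, Cmod_pow.
    pose proof (Cmod_ge_0 (x - y)%C). pose proof (Cmod_ge_0 (x ^ S n - y ^ S n)%C).
    assert (Cmod y ^ S n <= s ^ S n) by (apply pow_incr; split; [apply Cmod_ge_0|auto]).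
    assert (Cmod x * Cmod (x ^ S n - y ^ S n)%C <= s * (INR (S n) * s ^ n * Cmod (x - y)%C))
      by (apply Rmult_le_compat; auto; apply Cmod_ge_0).
    rewrite (S_INR (S n)). simpl pow in *. nra.
Qed.

Lemma power_series_lipschitz (b : nat -> C) (x y : C) (s B : R) : Cmod x <= s -> Cmod y <= s ->
  (forall n, Cmod (deriv_coefs b n) * s ^ n <= B * (1/2) ^ n) ->
  abs_summable (fun n => (b n * x ^ n)%C) -> abs_summable (fun n => (b n * y ^ n)%C) ->
  Cmod (power_series b x - power_series b y)%C <= 4 * (B * Cmod (x - y)%C).
Proof.
  intros Hx Hy HB Ex Ey. unfold power_series.
  rewrite <- Cseries_minus, Cseries_incr_1 by auto using abs_summable_minus.
  simpl Cpow. replace (b 0%nat * 1 - b 0%nat * 1)%C with (RtoC 0) by ring. rewrite Cplus_0_l.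
  apply Cmod_Cseries_geom. intros n.
  replace (b (S n) * (x * x ^ n) - b (S n) * (y * y ^ n))%C
    with (b (S n) * (x ^ S n - y ^ S n))%C by (simpl; ring).
  rewrite Cmod_mult. pose proof (Cmod_pow_S_diff x y s n Hx Hy).
  specialize (HB n). unfold deriv_coefs in HB.
  rewrite Cmod_mult, Cmod_R, Rabs_pos_eq in HB by apply pos_INR.
  pose proof (Cmod_ge_0 (b (S n))). pose proof (Cmod_ge_0 (x - y)%C).
  apply Rle_trans with (Cmod (b (S n)) * (INR (S n) * s ^ n * Cmod (x - y)%C)).
  - apply Rmult_le_compat_l; auto.
  - replace (Cmod (b (S n)) * (INR (S n) * s ^ n * Cmod (x - y)%C))
      with (INR (S n) * Cmod (b (S n)) * s ^ n * Cmod (x - y)%C) by ring.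
    replace (B * Cmod (x - y)%C * (1/2) ^ n) with (B * (1/2) ^ n * Cmod (x - y)%C) by ring.
    apply Rmult_le_compat_r; auto.
Qed.

Lemma power_series_lipschitz_inv_pow (b : nat -> C) (x y : C) (r : R) (N p : nat) :
  0 < r <= 1/2 -> Cmod x <= / r ^ (N + 1) -> Cmod y <= / r ^ (N + 1) ->
  (forall n, Cmod (deriv_coefs b n) * (/ r ^ (N + 2)) ^ n <= / r ^ p) ->
  abs_summable (fun n => (b n * x ^ n)%C) -> abs_summable (fun n => (b n * y ^ n)%C) ->
  Cmod (power_series b x - power_series b y)%C <= 4 * (/ r ^ p * Cmod (x - y)%C).
Proof.
  intros Hr Hx Hy HD Ex Ey. apply (power_series_lipschitz _ _ _ (/ r ^ (N + 1))); auto.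
  intros n. specialize (HD n).
  replace ((/ r ^ (N + 1)) ^ n) with ((/ r ^ (N + 2)) ^ n * r ^ n).
  - assert (r ^ n <= (1/2) ^ n) by (apply pow_incr; lra).
    pose proof (pow_le (/ r ^ (N + 2)) n (Rlt_le _ _ (Rinv_0_lt_compat _ (pow_lt r _ (proj1 Hr))))).
    pose proof (Cmod_ge_0 (deriv_coefs b n)). pose proof (pow_le r n ltac:(lra)).
    rewrite <- Rmult_assoc. apply Rmult_le_compat; auto. now apply Rmult_le_pos.
  - rewrite <- Rpow_mult_distr. f_equal. replace (N + 2)%nat with (S (N + 1)) by lia.
    simpl. field. split; [apply pow_nonzero|]; lra.
Qed.

Lemma power_series_close (b b' : nat -> C) (x : C) (r : R) (N k : nat) : 0 < r <= 1/2 ->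
  Cmod x <= / r ^ N -> (forall n, Cmod (b' n - b n)%C <= r ^ (n * (N + 1) + k)) ->
  abs_summable (fun n => (b n * x ^ n)%C) ->
  Cmod (power_series b' x - power_series b x)%C <= 4 * r ^ k.
Proof.
  intros Hr Hx Hb Hsum.
  assert (Hdiff : forall n, Cmod ((b' n - b n) * x ^ n)%C <= r ^ k * (1/2) ^ n).
  { intros n. rewrite Cmod_mult, Cmod_pow.
    eapply Rle_trans.
    - apply Rmult_le_compat; [apply Cmod_ge_0|apply pow_le, Cmod_ge_0|apply Hb|].
      apply pow_incr; split; [apply Cmod_ge_0|exact Hx].
    - rewrite pow_inv_pow_cancel by lra. apply Rmult_le_compat_l; [apply pow_le; lra|].
      apply pow_incr. simpl; lra. }
  unfold power_series.
  rewrite (Cseries_ext (fun n => (b' n * x ^ n)%C) (fun n => (b n * x ^ n + (b' n - b n) * x ^ n)%C))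
    by (intros; ring).
  rewrite Cseries_plus by (auto; exact (abs_summable_geom _ _ Hdiff)).
  replace (Cseries (fun n => (b n * x ^ n)%C) + Cseries (fun n => ((b' n - b n) * x ^ n)%C)
           - Cseries (fun n => (b n * x ^ n)%C))%C
    with (Cseries (fun n => ((b' n - b n) * x ^ n)%C)) by ring.
  exact (Cmod_Cseries_geom _ _ Hdiff).
Qed.

Lemma deriv_coefs_close (b b' : nat -> C) (r : R) (N k : nat) : 0 < r <= 1/2 ->
  (forall n, Cmod (b' n - b n)%C <= r ^ (n * (N + 2) + k)) ->
  forall n, Cmod (deriv_coefs b' n - deriv_coefs b n)%C <= r ^ (n * (N + 1) + k).
Proof.
  intros Hr Hb n. unfold deriv_coefs.
  replace (INR (S n) * b' (S n) - INR (S n) * b (S n))%C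
    with (INR (S n) * (b' (S n) - b (S n)))%C by ring.
  rewrite Cmod_mult, Cmod_R, Rabs_pos_eq by apply pos_INR.
  specialize (Hb (S n)).
  replace (S n * (N + 2) + k)%nat with ((n * (N + 1) + k) + (n + (N + 2)))%nat in Hb by ring.
  rewrite (pow_add r (n * (N + 1) + k)), (pow_add r n (N + 2)) in Hb. set (A := r ^ (n * (N + 1) + k)) in *.
  assert (HA : 0 <= A) by (apply pow_le; lra).
  assert (Hweight : INR (S n) * (r ^ n * r ^ (N + 2)) <= 1).
  { pose proof (INR_S_le_pow2 n). pose proof (pow_le_1 r (N + 2) ltac:(lra)).
    pose proof (pow_le r (N + 2) ltac:(lra)). pose proof (pos_INR (S n)).
    assert (Hrn : r ^ n <= (1/2) ^ n) by (apply pow_incr; lra).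
    assert (Hhalf : 2 ^ n * (1/2) ^ n = 1) by (rewrite <- Rpow_mult_distr; replace (2 * (1/2)) with 1 by field; apply pow1).
    assert (INR (S n) * r ^ n <= 1).
    { apply Rle_trans with (2 ^ n * (1/2) ^ n); [|lra].
      apply Rmult_le_compat; [apply pos_INR|apply pow_le; lra|auto|auto]. }
    pose proof (pow_le r n ltac:(lra)). nra. }
  apply Rle_trans with (INR (S n) * (A * (r ^ n * r ^ (N + 2)))).
  - apply Rmult_le_compat_l; [apply pos_INR|]. exact Hb.
  - nra.
Qed.

Lemma Cmod_power_series_sub_head (b : nat -> C) (x : C) (B t : R) : 0 <= t <= 1/2 ->
  (forall n, Cmod (b (S n)) * Cmod x ^ S n <= B * t ^ S n) ->
  abs_summable (fun n => (b n * x ^ n)%C) ->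
  Cmod (power_series b x - b 0%nat)%C <= 4 * (B * t).
Proof.
  intros Ht HB Hsum. unfold power_series. rewrite Cseries_incr_1 by auto.
  simpl Cpow at 1. replace (b 0%nat * 1 + _ - b 0%nat)%C
    with (Cseries (fun n => (b (S n) * x ^ S n)%C)) by ring.
  assert (HBt : 0 <= B * t).
  { specialize (HB O). pose proof (Cmod_ge_0 (b 1%nat)).
    pose proof (pow_le (Cmod x) 1 (Cmod_ge_0 x)). simpl pow in *. nra. }
  apply Cmod_Cseries_geom. intros n. rewrite Cmod_mult, Cmod_pow.
  eapply Rle_trans; [apply HB|]. simpl pow.
  assert (t ^ n <= (1/2) ^ n) by (apply pow_incr; lra).
  rewrite <- Rmult_assoc. apply Rmult_le_compat_l; auto.
Qed.

(** * Cauchy's estimate via roots of unity *)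

Definition root_of_unity (K : nat) : C := (cos (2 * PI / INR K), sin (2 * PI / INR K)).

Lemma root_of_unity_pow (K j : nat) :
  (root_of_unity K ^ j)%C = (cos (INR j * (2 * PI / INR K)), sin (INR j * (2 * PI / INR K))).
Proof.
  induction j; simpl Cpow.
  - now rewrite Rmult_0_l, cos_0, sin_0.
  - rewrite IHj, S_INR. unfold root_of_unity, Cmult; simpl.
    replace ((INR j + 1) * (2 * PI / INR K)) with (2 * PI / INR K + INR j * (2 * PI / INR K)) by ring.
    rewrite cos_plus, sin_plus. f_equal; ring.
Qed.

Lemma Cmod_root_of_unity_pow (K j : nat) : Cmod (root_of_unity K ^ j)%C = 1.
Proof.
  rewrite root_of_unity_pow. set (x := INR j * (2 * PI / INR K)).
  pose proof (sin2_cos2 x) as H. unfold Rsqr in H. unfold Cmod; simpl.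
  replace (cos x * (cos x * 1) + sin x * (sin x * 1)) with 1 by lra. apply sqrt_1.
Qed.

Lemma Cmod_root_of_unity_pow_pow (K i j : nat) : Cmod ((root_of_unity K ^ i) ^ j)%C = 1.
Proof. now rewrite Cmod_pow, Cmod_root_of_unity_pow, pow1. Qed.

Lemma root_of_unity_pow_K (K : nat) : (0 < K)%nat -> (root_of_unity K ^ K)%C = RtoC 1.
Proof.
  intros HK. rewrite root_of_unity_pow.
  replace (INR K * (2 * PI / INR K)) with (2 * PI) by (field; apply not_0_INR; lia).
  now rewrite cos_2PI, sin_2PI.
Qed.

Lemma root_of_unity_pow_neq_1 (K r : nat) : (0 < r < K)%nat -> (root_of_unity K ^ r)%C <> RtoC 1.
Proof.
  intros Hr E. rewrite root_of_unity_pow in E. injection E as Ec Es.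
  set (x := INR r * (2 * PI / INR K)) in *.
  assert (HK : 0 < INR K) by (apply lt_0_INR; lia).
  assert (Hr1 : 0 < INR r) by (apply lt_0_INR; lia).
  assert (Hr2 : INR r < INR K) by (apply lt_INR; lia).
  pose proof PI_RGT_0.
  assert (Hx : 0 < x < 2 * PI).
  { unfold x. replace (INR r * (2 * PI / INR K)) with (2 * PI * (INR r / INR K)) by (field; lra).
    assert (0 < INR r / INR K < 1).
    { split; [apply Rdiv_lt_0_compat; lra|].
      apply (Rmult_lt_reg_r (INR K)); auto. unfold Rdiv; rewrite Rmult_assoc, Rinv_l; lra. }
    nra. }
  destruct (Rtotal_order x PI) as [H3|[H3|H3]].
  - pose proof (sin_gt_0 x (proj1 Hx) H3). lra.
  - rewrite H3, cos_PI in Ec. lra.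
  - pose proof (sin_lt_0 x H3 (proj2 Hx)). lra.
Qed.

(* Orthogonality of characters: among the exponents [m < n + K], averaging [w^(m + K - n)] over
   the [K]-th roots of unity [w] picks out [m = n]. *)
Lemma Csum_root_of_unity_diag (K n : nat) : (n < K)%nat ->
  Csum K (fun j => ((root_of_unity K ^ (n + (K - n))) ^ j)%C) = RtoC (INR K).
Proof.
  intros HnK. replace (n + (K - n))%nat with K by lia. rewrite root_of_unity_pow_K by lia.
  rewrite (Csum_ext _ _ (fun _ => RtoC 1)) by (intros; apply Cpow_1_l).
  rewrite Csum_const. ring.
Qed.

Lemma Csum_root_of_unity_offdiag (K n m : nat) : (n < K)%nat -> (m < n + K)%nat -> m <> n ->
  Csum K (fun j => ((root_of_unity K ^ (m + (K - n))) ^ j)%C) = RtoC 0.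
Proof.
  intros HnK HmK Hmn. apply Csum_geom_eq_0.
  - destruct (Nat.lt_ge_cases (m + (K - n)) K) as [Hl|Hl].
    + apply root_of_unity_pow_neq_1; lia.
    + replace (m + (K - n))%nat with (K + (m - n))%nat by lia.
      rewrite Cpow_add_r, root_of_unity_pow_K, Cmult_1_l by lia.
      apply root_of_unity_pow_neq_1; lia.
  - rewrite <- Cpow_mult_r, Nat.mul_comm, Cpow_mult_r, root_of_unity_pow_K by lia.
    apply Cpow_1_l.
Qed.

Lemma Csum_power_series_root_average (b : nat -> C) (S : R) (K n : nat) : 0 <= S ->
  ex_series (fun m => Cmod (b m) * S ^ m) ->
  Csum K (fun j => ((root_of_unity K ^ (K - n)) ^ j
                    * power_series b (S * root_of_unity K ^ j))%C)
  = Cseries (fun m => (b m * S ^ m * Csum K (fun j => (root_of_unity K ^ (m + (K - n))) ^ j))%C).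
Proof.
  intros HS Hex. unfold power_series. set (w := root_of_unity K).
  assert (Hterm : forall j m, Cmod ((w ^ (K - n)) ^ j * (b m * (S * w ^ j) ^ m))%C
                              <= Cmod (b m) * S ^ m).
  { intros j m. unfold w.
    rewrite !Cmod_mult, Cmod_root_of_unity_pow_pow, Cmod_pow, Cmod_mult,
      Cmod_root_of_unity_pow, Cmod_R, Rabs_pos_eq, Rmult_1_r, Rmult_1_l by lra. lra. }
  rewrite (Csum_ext _ _ (fun j => Cseries (fun m => (w ^ (K - n)) ^ j * (b m * (S * w ^ j) ^ m))%C)).
  2:{ intros j. rewrite Cseries_scal; [reflexivity|].
      apply (abs_summable_le _ (fun m => Cmod (b m) * S ^ m)); auto.
      intros m. specialize (Hterm j m). unfold w in *.
      rewrite Cmod_mult, Cmod_root_of_unity_pow_pow in Hterm. lra. }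
  rewrite (Csum_Cseries _ _ _ Hterm Hex). apply Cseries_ext; intros m.
  rewrite <- Csum_scal. apply Csum_ext; intros j.
  rewrite Cpow_mult_l, <- !Cpow_mult_r.
  replace ((m + (K - n)) * j)%nat with (j * m + (K - n) * j)%nat by ring.
  rewrite Cpow_add_r. ring.
Qed.

(* The coefficient [b n] is extracted by averaging [x |-> sum_m b m x^m] against [x^(-n)] over
   the [K]-th roots of unity scaled by [S]; for large [K] the aliased coefficients [b (n + K + k)]
   only contribute a small tail. *)
Lemma Cauchy_estimate (b : nat -> C) (S B : R) : 0 < S ->
  ex_series (fun m => Cmod (b m) * S ^ m) ->
  (forall x, Cmod x = S -> Cmod (power_series b x) <= B) ->
  forall n, Cmod (b n) * S ^ n <= B.
Proof.
  intros HS Hex HB n. set (x := fun m => Cmod (b m) * S ^ m) in *.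
  apply Rle_plus_epsilon. intros eps Heps.
  destruct (Series_tail_le x (eps / 2) Hex ltac:(lra)) as [N0 HN0].
  set (K := (N0 + n + 1)%nat).
  assert (HK : 0 < INR K) by (apply lt_0_INR; lia).
  set (W := fun m => Csum K (fun j => (root_of_unity K ^ (m + (K - n))) ^ j)%C).
  set (v := fun m => (b m * S ^ m * W m)%C).
  assert (Hv : forall m, Cmod (v m) <= INR K * x m).
  { intros m. unfold v, x. rewrite !Cmod_mult, Cmod_pow, Cmod_R, Rabs_pos_eq by lra.
    assert (Cmod (W m) <= INR K).
    { rewrite <- (Rmult_1_r (INR K)). apply Cmod_Csum_le. intros; rewrite Cmod_root_of_unity_pow_pow; lra. }
    pose proof (Cmod_ge_0 (b m)). pose proof (pow_le S m ltac:(lra)).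
    rewrite (Rmult_comm (INR K)). apply Rmult_le_compat_l; auto. now apply Rmult_le_pos. }
  assert (Hexv : ex_series (fun m => INR K * x m)) by (apply ex_series_Rmult_l, Hex).
  assert (Haverage : Cmod (Cseries v) <= INR K * B).
  { unfold v, W. rewrite <- Csum_power_series_root_average by (auto; lra).
    apply Cmod_Csum_le. intros j.
    rewrite Cmod_mult, Cmod_root_of_unity_pow_pow, Rmult_1_l. apply HB.
    rewrite Cmod_mult, Cmod_root_of_unity_pow, Cmod_R, Rabs_pos_eq; lra. }
  assert (Hsplit : Cseries v = (v n + Cseries (fun k => v (n + K + k)%nat))%C).
  { rewrite (Cseries_incr_n v (n + K)) by exact (abs_summable_le _ _ Hv Hexv).
    f_equal. apply Csum_single; [lia|].
    intros k Hk Hkn. unfold v, W. rewrite Csum_root_of_unity_offdiag by lia. ring. }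
  assert (Hvn : Cmod (v n) = INR K * x n).
  { unfold v, W, x. rewrite Csum_root_of_unity_diag by lia.
    rewrite !Cmod_mult, Cmod_pow, !Cmod_R, !Rabs_pos_eq by lra. ring. }
  assert (Htail : Cmod (Cseries (fun k => v (n + K + k)%nat)) <= INR K * eps).
  { eapply Rle_trans.
    - apply (Cmod_Cseries_le _ (fun k => INR K * x (n + K + k)%nat)); [intros; apply Hv|].
      apply ex_series_Rmult_l. exact (proj1 (ex_series_incr_n x (n + K)) Hex).
    - rewrite Series_scal_l. specialize (HN0 (n + K)%nat ltac:(lia)).
      assert (INR K * Series (fun k => x (n + K + k)%nat) <= INR K * (eps / 2))
        by (apply Rmult_le_compat_l; lra).
      lra. }
  assert (Hle : INR K * x n <= INR K * B + INR K * eps).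
  { rewrite <- Hvn. replace (v n) with (Cseries v - Cseries (fun k => v (n + K + k)%nat))%C
      by (rewrite Hsplit; ring).
    eapply Rle_trans; [apply Cmod_triangle|]. rewrite Cmod_opp. lra. }
  apply (Rmult_le_reg_l (INR K)); unfold x in Hle; lra.
Qed.

(** * Saturation *)

Lemma eventually0_and (P Q : R -> Prop) :
  eventually0 P -> eventually0 Q -> eventually0 (fun e => P e /\ Q e).
Proof.
  intros [a [Ha HP]] [b [Hb HQ]]. exists (Rmin a b). split.
  - split; [apply Rmin_pos; lra|]. eapply Rle_trans; [apply Rmin_l|lra].
  - intros e He. pose proof (Rmin_l a b). pose proof (Rmin_r a b).
    split; [apply HP|apply HQ]; lra.
Qed.

Lemma eventually0_mono (P Q : R -> Prop) :
  (forall e, 0 < e <= 1 -> P e -> Q e) -> eventually0 P -> eventually0 Q.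
Proof. intros H [a [Ha HP]]. exists a. split; auto. intros e He. apply H; [lra|auto]. Qed.

Lemma eventually0_of_forall (P : R -> Prop) : (forall e, 0 < e <= 1 -> P e) -> eventually0 P.
Proof. intros H. exists 1. split; [lra|auto]. Qed.

Section Saturation.

Variables (Q : R -> C -> Prop) (phi : R -> C -> nat -> Prop).
Hypothesis Q_0 : forall e, Q e (RtoC 0).
Hypothesis phi_mono : forall e x p q, (p <= q)%nat -> phi e x p -> phi e x q.

Lemma bad_points_sequence :
  ~ (exists p, eventually0 (fun e => forall x, Q e x -> phi e x p)) ->
  exists s : nat -> R * C, forall k,
    (0 < fst (s k) <= (1/2) ^ k /\ Q (fst (s k)) (snd (s k)) /\ ~ phi (fst (s k)) (snd (s k)) k)
    /\ fst (s (S k)) < fst (s k).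
Proof.
  intros Hn.
  set (bad := fun (p : nat) (e0 : R) (ex : R * C) =>
    0 < fst ex <= e0 /\ Q (fst ex) (snd ex) /\ ~ phi (fst ex) (snd ex) p).
  assert (Hbad : forall p e0, 0 < e0 <= 1 -> exists ex, bad p e0 ex).
  { intros p e0 He0. apply NNPP; intros H. apply Hn. exists p, e0. split; auto.
    intros e He x Hx. apply NNPP; intros Hp. apply H. exists (e, x). unfold bad; simpl; auto. }
  set (g := fun p e0 => epsilon (inhabits (0, RtoC 0)) (bad p e0)).
  assert (Hg : forall p e0, 0 < e0 <= 1 -> bad p e0 (g p e0))
    by (intros p e0 He0; apply epsilon_spec, Hbad, He0).
  set (s := fix s (k : nat) : R * C :=
              match k with O => g O 1 | S k => g (S k) (fst (s k) / 2) end).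
  assert (Hs : forall k, bad k ((1/2) ^ k) (s k)).
  { induction k as [|k [[H1 H1'] _]].
    - apply (Hg O 1). lra.
    - assert ((1/2) ^ k <= 1) by (apply pow_le_1; lra).
      change (s (S k)) with (g (S k) (fst (s k) / 2)).
      destruct (Hg (S k) (fst (s k) / 2) ltac:(lra)) as [[H2 H2'] H3].
      split; [|exact H3]. simpl pow. lra. }
  exists s. intros k. split; [apply Hs|].
  destruct (Hs k) as [[H1 H1'] _].
  assert ((1/2) ^ k <= 1) by (apply pow_le_1; lra).
  destruct (Hg (S k) (fst (s k) / 2) ltac:(lra)) as [[H2 H2'] _].
  change (s (S k)) with (g (S k) (fst (s k) / 2)). lra.
Qed.

Lemma net_through_points (s : nat -> R * C) :
  (forall k, Q (fst (s k)) (snd (s k))) -> (forall k, fst (s (S k)) < fst (s k)) ->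
  exists w : net, (forall e, Q e (w e)) /\ forall k, w (fst (s k)) = snd (s k).
Proof.
  intros HQ Hdec.
  assert (Hinj : forall k l, fst (s k) = fst (s l) -> k = l).
  { assert (Hlt : forall k l, (k < l)%nat -> fst (s l) < fst (s k)).
    { intros k l Hkl. induction Hkl; [apply Hdec|]. specialize (Hdec m). lra. }
    intros k l E. destruct (Nat.lt_trichotomy k l) as [H|[H|H]]; auto;
      apply Hlt in H; lra. }
  exists (fun e => match excluded_middle_informative (exists k, fst (s k) = e) with
          | left H => snd (s (proj1_sig (constructive_indefinite_description _ H)))
          | right _ => RtoC 0 end).
  split.
  - intros e. destruct (excluded_middle_informative _) as [H|H]; auto.
    destruct (constructive_indefinite_description _ H) as [l Hl]; simpl. subst e. apply HQ.
  - intros k. destruct (excluded_middle_informative _) as [H|H].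
    + destruct (constructive_indefinite_description _ H) as [l Hl]; simpl.
      apply Hinj in Hl. now subst.
    + exfalso; apply H; eauto.
Qed.

(* By contradiction: a net through points that violate the [k]-th bound at some [e <= 2^-k]
   satisfies no bound eventually. *)
Lemma eventually_uniform_of_nets :
  (forall w : net, (forall e, Q e (w e)) -> exists p, eventually0 (fun e => phi e (w e) p)) ->
  exists p, eventually0 (fun e => forall x, Q e x -> phi e x p).
Proof.
  intros Hw. apply NNPP. intros Hn.
  destruct (bad_points_sequence Hn) as [s Hs].
  destruct (net_through_points s (fun k => proj1 (proj2 (proj1 (Hs k)))) (fun k => proj2 (Hs k)))
    as [w [HwQ Hws]].
  destruct (Hw w HwQ) as [p [e0 [He0 Hp]]].
  destruct (pow_lt_1_zero (1/2) ltac:(rewrite Rabs_pos_eq; lra) e0 ltac:(lra)) as [N HN].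
  set (k := Nat.max N p).
  destruct (Hs k) as [[[H1 H1'] [_ Hnot]] _].
  apply Hnot, (phi_mono _ _ p); [unfold k; lia|].
  rewrite <- Hws. apply Hp. split; auto.
  specialize (HN k ltac:(unfold k; lia)). rewrite Rabs_pos_eq in HN by (apply pow_le; lra). lra.
Qed.

End Saturation.

Section ModerateNets.

Variable rho : rnet.
Hypothesis rho_gauge : is_gauge rho.

Lemma gauge_pos (e : R) : 0 < e <= 1 -> 0 < rho e <= 1.
Proof. apply (proj1 rho_gauge). Qed.

Lemma gauge_eventually_lt (d : R) : 0 < d -> eventually0 (fun e => 0 < rho e <= 1 /\ rho e < d).
Proof.
  intros Hd. destruct (proj2 rho_gauge d Hd) as [e0 [He0 H]].
  exists (Rmin e0 1). split; [split; [apply Rmin_pos; lra|apply Rmin_r]|].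
  intros e He. pose proof (Rmin_l e0 1). pose proof (Rmin_r e0 1).
  split; [apply gauge_pos|apply H]; lra.
Qed.

Lemma moderate_of_bound (w : net) (N : nat) :
  (forall e, 0 < e <= 1 -> Cmod (w e) <= / rho e ^ N) -> moderate rho w.
Proof. intros H. exists N. now apply eventually0_of_forall. Qed.

Lemma moderate_of_sum_bound (x y w : net) : moderate rho x -> moderate rho y ->
  (forall e, Cmod (w e) <= Cmod (x e) + Cmod (y e)) -> moderate rho w.
Proof.
  intros [A HA] [B HB] Hw. exists (S (Nat.max A B)).
  generalize (eventually0_and _ _ (eventually0_and _ _ HA HB)
                (gauge_eventually_lt (1/2) ltac:(lra))).
  apply eventually0_mono. intros e _ [[H1 H2] [H3 H4]].
  specialize (Hw e). pose proof (inv_pow_add_le (rho e) A B ltac:(lra)). lra.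
Qed.

Lemma moderate_plus (x y : net) : moderate rho x -> moderate rho y ->
  moderate rho (fun e => (x e + y e)%C).
Proof. intros Hx Hy. apply (moderate_of_sum_bound x y); auto. intros; apply Cmod_triangle. Qed.

Lemma moderate_minus (x y : net) : moderate rho x -> moderate rho y ->
  moderate rho (fun e => (x e - y e)%C).
Proof.
  intros Hx Hy. apply (moderate_of_sum_bound x y); auto.
  intros e. unfold Cminus. rewrite <- (Cmod_opp (y e)). apply Cmod_triangle.
Qed.

Lemma negligible_of_sum_bound (x y w : net) : negligible rho x -> negligible rho y ->
  (forall e, Cmod (w e) <= Cmod (x e) + Cmod (y e)) -> negligible rho w.
Proof.
  intros Hx Hy Hw q.
  generalize (eventually0_and _ _ (eventually0_and _ _ (Hx (S q)) (Hy (S q)))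
                (gauge_eventually_lt (1/2) ltac:(lra))).
  apply eventually0_mono. intros e _ [[H1 H2] [H3 H4]].
  specialize (Hw e). pose proof (pow_le (rho e) q ltac:(lra)). simpl pow in *. nra.
Qed.

Lemma gequiv_trans (x y z : net) : gequiv rho x y -> gequiv rho y z -> gequiv rho x z.
Proof.
  intros Hxy Hyz. apply (negligible_of_sum_bound _ _ _ Hxy Hyz). intros e.
  replace (x e - z e)%C with ((x e - y e) + (y e - z e))%C by ring. apply Cmod_triangle.
Qed.

Lemma gequiv_minus (x x' y y' : net) : gequiv rho x x' -> gequiv rho y y' ->
  gequiv rho (fun e => x e - y e)%C (fun e => x' e - y' e)%C.
Proof.
  intros Hx Hy. apply (negligible_of_sum_bound _ _ _ Hx Hy). intros e.
  replace (x e - y e - (x' e - y' e))%C with ((x e - x' e) + - (y e - y' e))%C by ring.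
  rewrite <- (Cmod_opp (y e - y' e)%C). apply Cmod_triangle.
Qed.

Lemma moderate_gequiv (x y : net) : moderate rho x -> gequiv rho y x -> moderate rho y.
Proof.
  intros Hx Hyx. apply (moderate_of_sum_bound x (fun e => (y e - x e)%C)); auto.
  - exists 0%nat. generalize (Hyx 0%nat). apply eventually0_mono.
    intros e He H. simpl in *. rewrite Rinv_1. exact H.
  - intros e. replace (y e) with (x e + (y e - x e))%C at 1 by ring. apply Cmod_triangle.
Qed.

End ModerateNets.

(** * Bounded generalized entire functions *)

Lemma Cpow_Defs (z : C) (n : nat) : Defs.Cpow z n = (z ^ n)%C.
Proof. reflexivity. Qed.

Definition coefs_at (a : nat -> net) (e : R) (n : nat) : C := a n e.

Section BoundedGeneralizedEntire.

Variables (rho : rnet) (F : net -> net) (c : net) (a : nat -> net) (M : rnet) (P : nat).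
Hypothesis rho_gauge : is_gauge rho.
Hypothesis c_moderate : moderate rho c.
Hypothesis conv_everywhere : forall z, moderate rho z -> in_conv_set rho a c z.
Hypothesis F_reps : forall z, moderate rho z -> conv_reps rho a c z (F z).
Hypothesis F_bounded : forall z, moderate rho z -> abs_lt rho (F z) M.
Hypothesis M_le : eventually0 (fun e => Rabs (M e) <= / rho e ^ P).

Lemma rad_gt_inv_pow (N : nat) : eventually0 (fun e => Rbar_lt (/ rho e ^ N) (rad a e)).
Proof.
  set (z := fun e => (c e + RtoC (/ rho e ^ N))%C).
  assert (Hz : moderate rho z).
  { apply moderate_plus; auto. apply (moderate_of_bound rho _ N). intros e He.
    pose proof (gauge_pos _ rho_gauge e He).
    rewrite Cmod_R, Rabs_pos_eq by (apply Rlt_le, Rinv_0_lt_compat, pow_lt; lra). lra. }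
  destruct (conv_everywhere z Hz) as [_ [[m Hm] _]].
  generalize Hm. apply eventually0_mono. intros e He H.
  pose proof (gauge_pos _ rho_gauge e He). pose proof (pow_lt (rho e) m ltac:(lra)).
  unfold z in H. replace (c e + RtoC (/ rho e ^ N) - c e)%C with (RtoC (/ rho e ^ N)) in H by ring.
  rewrite Cmod_R, Rabs_pos_eq in H by (apply Rlt_le, Rinv_0_lt_compat, pow_lt; lra).
  destruct (rad a e); simpl in *; lra.
Qed.

Lemma coefs_summable (N : nat) : eventually0 (fun e => 0 < rho e < 1/16 /\
  ex_series (fun n => Cmod (coefs_at a e n) * (/ rho e ^ N) ^ n) /\
  ex_series (fun n => Cmod (deriv_coefs (coefs_at a e) n) * (/ rho e ^ N) ^ n)).
Proof.
  generalize (eventually0_and _ _ (rad_gt_inv_pow (S N)) (gauge_eventually_lt _ rho_gauge (1/16) ltac:(lra))).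
  apply eventually0_mono. intros e _ [Hrad [Hr1 Hr2]]. split; [lra|].
  apply (ex_series_coefs_within_radius _ (/ rho e ^ S N)); [|exact Hrad].
  pose proof (inv_pow_S_ge_double (rho e) N ltac:(lra)).
  pose proof (inv_pow_ge_1 (rho e) N ltac:(lra)). lra.
Qed.

Lemma F_value_near (z : net) : moderate rho z ->
  exists u : net, gequiv rho u (fun e => (z e - c e)%C) /\
    gequiv rho (F z) (fun e => power_series (coefs_at a e) (u e)).
Proof.
  intros Hz. destruct (F_reps z Hz) as (z' & c' & a' & Hz' & Hc' & Ha' & _ & _ & Hv & _).
  set (u := fun e => (z' e - c' e)%C).
  assert (Hu : gequiv rho u (fun e => (z e - c e)%C)) by exact (gequiv_minus _ rho_gauge _ _ _ _ Hz' Hc').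
  exists u. split; [exact Hu|]. apply (gequiv_trans _ rho_gauge _ _ _ Hv).
  destruct (moderate_gequiv _ rho_gauge _ _ (moderate_minus _ rho_gauge _ _ Hz c_moderate) Hu)
    as [N HN].
  intros q.
  generalize (eventually0_and _ _ HN
                (eventually0_and _ _ (Ha' (N + 1)%nat (q + 2)%nat) (coefs_summable N))).
  apply eventually0_mono. intros e _ [HuN [Hae [[Hr1 Hr2] [Hsum _]]]].
  eapply Rle_trans.
  - exact (power_series_close (coefs_at a e) (coefs_at a' e) (u e) (rho e) N (q + 2)
             ltac:(lra) HuN Hae (abs_summable_power_series _ _ _ HuN Hsum)).
  - pose proof (pow_S_add_small (rho e) q ltac:(lra)). pose proof (pow_le (rho e) (S q) ltac:(lra)).
    lra.
Qed.

Lemma deriv_series_moderate (z : net) : moderate rho z ->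
  moderate rho (fun e => power_series (deriv_coefs (coefs_at a e)) (z e - c e)%C).
Proof.
  intros Hz. destruct (F_reps z Hz) as (z' & c' & a' & Hz' & Hc' & Ha' & _ & _ & _ & Hd).
  set (zh := fun e => (c' e + (z e - c e))%C).
  assert (Hzh : gequiv rho zh z).
  { intros q. generalize (Hc' q). apply eventually0_mono. intros e _ H. unfold zh.
    replace (c' e + (z e - c e) - z e)%C with (c' e - c e)%C by ring. exact H. }
  set (Dz' := fun e => power_series (deriv_coefs (coefs_at a' e)) (z e - c e)%C).
  assert (HDz' : moderate rho Dz').
  { replace Dz' with (fun e => Cseries (fun n =>
      (INR (S n) * (a' (S n) e * Defs.Cpow (zh e - c' e) n))%C)); [exact (Hd zh Hzh)|].
    extensionality e. unfold Dz', power_series, deriv_coefs, coefs_at, zh.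
    apply Cseries_ext; intros n. rewrite Cpow_Defs.
    replace (c' e + (z e - c e) - c' e)%C with (z e - c e)%C by ring. ring. }
  destruct (moderate_minus _ rho_gauge _ _ Hz c_moderate) as [N HN].
  apply (moderate_of_sum_bound _ rho_gauge Dz'
           (fun e => Dz' e - power_series (deriv_coefs (coefs_at a e)) (z e - c e))%C); auto.
  - exists 2%nat.
    generalize (eventually0_and _ _ HN (eventually0_and _ _ (Ha' (N + 2)%nat 0%nat) (coefs_summable N))).
    apply eventually0_mono. intros e _ [HxN [Hae [[Hr1 Hr2] [_ HsumD]]]].
    eapply Rle_trans.
    + apply (power_series_close _ _ _ (rho e) N 0); [lra|exact HxN| |].
      * apply deriv_coefs_close; [lra|exact Hae].
      * exact (abs_summable_power_series _ _ _ HxN HsumD).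
    + assert (16 <= / rho e) by (replace 16 with (/ (1/16)) by field; apply Rinv_le_contravar; lra).
      rewrite <- pow_inv. simpl. nra.
  - intros e. replace (power_series (deriv_coefs (coefs_at a e)) (z e - c e)%C)
      with (Dz' e + - (Dz' e - power_series (deriv_coefs (coefs_at a e)) (z e - c e)))%C at 1 by ring.
    rewrite <- (Cmod_opp (Dz' e - _)%C). apply Cmod_triangle.
Qed.

Lemma deriv_coefs_bound (N : nat) : exists p, eventually0 (fun e =>
  forall n, Cmod (deriv_coefs (coefs_at a e) n) * (/ rho e ^ N) ^ n <= / rho e ^ p).
Proof.
  destruct (eventually_uniform_of_nets
              (fun e x => 0 < e <= 1 -> Cmod x <= / rho e ^ N)
              (fun e x p => 0 < rho e <= 1 ->
                 Cmod (power_series (deriv_coefs (coefs_at a e)) x) <= / rho e ^ p))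
    as [p Hp].
  - intros e He. pose proof (gauge_pos _ rho_gauge e He). rewrite Cmod_0.
    apply Rlt_le, Rinv_0_lt_compat, pow_lt; lra.
  - intros e x p q Hpq H Hr. eapply Rle_trans; [apply H; auto|]. apply inv_pow_le_mono; auto.
  - intros w Hw. set (z := fun e => (c e + w e)%C).
    assert (Hz : moderate rho z)
      by (apply moderate_plus; auto; apply (moderate_of_bound rho _ N); auto).
    destruct (deriv_series_moderate z Hz) as [p Hp]. exists p.
    generalize Hp. apply eventually0_mono. intros e _ H _. unfold z in H.
    replace (c e + w e - c e)%C with (w e) in H by ring. exact H.
  - exists p. generalize (eventually0_and _ _ Hp (coefs_summable N)).
    apply eventually0_mono. intros e He [HB [[Hr1 Hr2] [_ HD]]] n.
    apply (Cauchy_estimate _ (/ rho e ^ N)); auto.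
    + apply Rinv_0_lt_compat, pow_lt; lra.
    + intros x Hx. apply HB; [intros _; lra|lra].
Qed.

Lemma F_eventually_le (z : net) : moderate rho z ->
  eventually0 (fun e => Cmod (F z e) <= / rho e ^ P).
Proof.
  intros Hz. destruct (F_bounded z Hz) as [m Hm].
  generalize (eventually0_and _ _ (eventually0_and _ _ Hm M_le)
                (gauge_eventually_lt _ rho_gauge 1 ltac:(lra))).
  apply eventually0_mono. intros e _ [[Hm' HM] [Hr _]].
  pose proof (pow_lt (rho e) m (proj1 Hr)). pose proof (Rle_abs (M e)). lra.
Qed.

Lemma series_near_on_nets (N : nat) (w u : net) :
  (forall e, 0 < e <= 1 -> Cmod (w e) <= / rho e ^ N) -> gequiv rho u w ->
  eventually0 (fun e =>
    Cmod (power_series (coefs_at a e) (w e) - power_series (coefs_at a e) (u e))%C <= 1).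
Proof.
  intros Hw Hu. destruct (deriv_coefs_bound (N + 2)) as [p Hp].
  generalize (eventually0_and _ _ Hp (eventually0_and _ _ (Hu (p + 3)%nat)
    (eventually0_and _ _ (coefs_summable (N + 1)) (eventually0_of_forall _ Hw)))).
  apply eventually0_mono. intros e _ [Hp' [Hu' [[[Hr1 Hr2] [Hsum _]] Hwe]]].
  set (r := rho e) in *.
  rewrite pow_add in Hu'. pose proof (pow_lt r p Hr1). pose proof (pow_le_1 r p ltac:(lra)).
  assert (Hdel : Cmod (w e - u e)%C <= r ^ p * (1/16)).
  { rewrite <- Cmod_opp. replace (- (w e - u e))%C with (u e - w e)%C by ring.
    assert (r ^ 3 <= 1/16) by (simpl; nra).
    eapply Rle_trans; [exact Hu'|apply Rmult_le_compat_l; lra]. }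
  assert (HwN : Cmod (w e) <= / r ^ (N + 1)).
  { pose proof (inv_pow_le_mono r N (N + 1) ltac:(lra) ltac:(lia)). lra. }
  assert (HuN : Cmod (u e) <= / r ^ (N + 1)).
  { replace (u e) with (w e - (w e - u e))%C by ring.
    eapply Rle_trans; [apply Cmod_triangle|]. rewrite Cmod_opp.
    pose proof (inv_pow_S_ge_double r N ltac:(lra)). pose proof (inv_pow_ge_1 r N ltac:(lra)).
    replace (N + 1)%nat with (S N) by lia. nra. }
  eapply Rle_trans.
  - exact (power_series_lipschitz_inv_pow _ (w e) (u e) r N p ltac:(lra) HwN HuN Hp'
             (abs_summable_power_series _ _ _ HwN Hsum) (abs_summable_power_series _ _ _ HuN Hsum)).
  - apply Rle_trans with (4 * (/ r ^ p * (r ^ p * (1/16)))).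
    + apply Rmult_le_compat_l; [lra|].
      apply Rmult_le_compat_l; [apply Rlt_le, Rinv_0_lt_compat; lra|exact Hdel].
    + rewrite <- (Rmult_assoc (/ r ^ p)), Rinv_l; lra.
Qed.

Lemma series_bounded_on_nets (N : nat) (w : net) :
  (forall e, 0 < e <= 1 -> Cmod (w e) <= / rho e ^ N) ->
  eventually0 (fun e => Cmod (power_series (coefs_at a e) (w e)) <= / rho e ^ S P).
Proof.
  intros Hw. set (z := fun e => (c e + w e)%C).
  assert (Hz : moderate rho z)
    by (apply moderate_plus; auto; apply (moderate_of_bound rho _ N); auto).
  destruct (F_value_near z Hz) as [u [Hu HFu]].
  assert (Huw : gequiv rho u w).
  { intros q. generalize (Hu q). apply eventually0_mono. intros e _ H. unfold z in H.
    replace (c e + w e - c e)%C with (w e) in H by ring. exact H. }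
  generalize (eventually0_and _ _ (series_near_on_nets N w u Hw Huw)
    (eventually0_and _ _ (HFu 0%nat) (eventually0_and _ _ (F_eventually_le z Hz)
    (gauge_eventually_lt _ rho_gauge (1/4) ltac:(lra))))).
  apply eventually0_mono. intros e _ [Hnear [HF [HFz [Hr1 Hr2]]]].
  set (g := power_series (coefs_at a e)) in *.
  replace (g (w e)) with ((g (w e) - g (u e)) + (- (F z e - g (u e)) + F z e))%C by ring.
  eapply Rle_trans; [apply Cmod_triangle|].
  eapply Rle_trans; [apply Rplus_le_compat_l, Cmod_triangle|]. rewrite Cmod_opp.
  assert (4 <= / rho e) by (replace 4 with (/ (1/4)) by field; apply Rinv_le_contravar; lra).
  pose proof (inv_pow_ge_1 (rho e) P ltac:(lra)).
  simpl pow in *. rewrite Rinv_mult. nra.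
Qed.

Lemma coefs_bound (N : nat) : eventually0 (fun e =>
  forall n, Cmod (coefs_at a e n) * (/ rho e ^ N) ^ n <= / rho e ^ S P).
Proof.
  destruct (eventually_uniform_of_nets
              (fun e x => 0 < e <= 1 -> Cmod x <= / rho e ^ N)
              (fun e x _ => Cmod (power_series (coefs_at a e) x) <= / rho e ^ S P))
    as [p Hp].
  - intros e He. pose proof (gauge_pos _ rho_gauge e He). rewrite Cmod_0.
    apply Rlt_le, Rinv_0_lt_compat, pow_lt; lra.
  - auto.
  - intros w Hw. exists O. exact (series_bounded_on_nets N w Hw).
  - generalize (eventually0_and _ _ Hp (coefs_summable N)).
    apply eventually0_mono. intros e He [HB [[Hr1 Hr2] [HA _]]] n.
    apply (Cauchy_estimate _ (/ rho e ^ N)); auto.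
    + apply Rinv_0_lt_compat, pow_lt; lra.
    + intros x Hx. apply HB. intros _. lra.
Qed.

Lemma series_near_const_coef (u : net) : moderate rho u ->
  gequiv rho (fun e => power_series (coefs_at a e) (u e)) (fun e => a 0%nat e).
Proof.
  intros [N HN] q. set (d := (S P + (q + 2))%nat).
  generalize (eventually0_and _ _ HN
    (eventually0_and _ _ (coefs_bound (N + d)) (coefs_summable N))).
  apply eventually0_mono. intros e _ [HuN [Hab [[Hr1 Hr2] [Hsum _]]]].
  set (r := rho e) in *.
  assert (Hd : r ^ d <= 1/2).
  { unfold d. rewrite Nat.add_succ_l. simpl pow.
    pose proof (pow_le_1 r (P + (q + 2)) ltac:(lra)). pose proof (pow_le r (P + (q + 2)) ltac:(lra)).
    nra. }
  eapply Rle_trans.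
  - apply (Cmod_power_series_sub_head (coefs_at a e) (u e) (/ r ^ S P) (r ^ d));
      [split; [apply pow_le; lra|exact Hd]| |exact (abs_summable_power_series _ _ _ HuN Hsum)].
    intros n. specialize (Hab (S n)).
    assert (Hsplit : (/ r ^ N) ^ S n = (/ r ^ (N + d)) ^ S n * (r ^ d) ^ S n).
    { rewrite <- Rpow_mult_distr. f_equal. rewrite pow_add. field. split; apply pow_nonzero; lra. }
    apply Rle_trans with (Cmod (coefs_at a e (S n)) * (/ r ^ N) ^ S n).
    + apply Rmult_le_compat_l; [apply Cmod_ge_0|]. apply pow_incr; split; [apply Cmod_ge_0|exact HuN].
    + rewrite Hsplit, <- Rmult_assoc. apply Rmult_le_compat_r; [apply pow_le, pow_le; lra|exact Hab].
  - replace (/ r ^ S P * r ^ d) with (r ^ (q + 2))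
      by (unfold d; rewrite (pow_add r (S P)); field; apply pow_nonzero; lra).
    pose proof (pow_S_add_small r q ltac:(lra)). pose proof (pow_le r (S q) ltac:(lra)). lra.
Qed.

Lemma F_near_const_coef (z : net) : moderate rho z -> gequiv rho (F z) (fun e => a 0%nat e).
Proof.
  intros Hz. destruct (F_value_near z Hz) as [u [Hu HFu]].
  apply (gequiv_trans _ rho_gauge _ _ _ HFu), series_near_const_coef.
  exact (moderate_gequiv _ rho_gauge _ _ (moderate_minus _ rho_gauge _ _ Hz c_moderate) Hu).
Qed.

End BoundedGeneralizedEntire.

Theorem theorem3p4 (rho : R -> R) (F : net -> net) :
  is_gauge rho ->
  gfun rho F ->
  GHF rho F ->
  gen_entire rho F ->
  (exists M : rnet, rmoderate rho M /\ rlt rho (fun _ => 0) M /\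
     forall z, moderate rho z -> abs_lt rho (F z) M) ->
  exists c : net, moderate rho c /\ forall z, moderate rho z -> gequiv rho (F z) c.
Proof.
  intros Hg _ _ (c & a & Hc & [Q [R0 Ha]] & Hconv & Hreps) (M & [P HP] & _ & Hbd).
  exists (fun e => a 0%nat e). split.
  - exists R0. generalize Ha. apply eventually0_mono. intros e _ H. exact (H 0%nat).
  - intros z Hz. exact (F_near_const_coef rho F c a M P Hg Hc Hconv Hreps Hbd HP z Hz).
Qed.
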